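(* Let $\Omega\subset\mathbb{R}^2$ be a domain with coordinates $(x,y)$ and let $r:\Omega\to S^5\subset\mathbb{C}^3$ be a smooth map such that $\psi=\mathcal{H}\circ r:\Omega\to\mathbb{C}P^2$ is a conformal Lagrangian immersion and $$\langle r,r_x\rangle=\langle r,r_y\rangle=\langle r_x,r_y\rangle=0,\qquad |r_x|=|r_y|=e^{v},$$ so that $e^{2v(x,y)}(dx^2+dy^2)$ is the induced metric. Let $\beta:\Omega\to\mathbb{R}$ be a smooth function (the Lagrangian angle) such that the matrix with rows $e^{i\beta}r,\ e^{-v}r_x,\ e^{-v}r_y$ lies in $\mathrm{SU}(3)$. Define real functions $f,g$ by $$if=\langle \partial_x(e^{-v}r_y),e^{-v}r_y\rangle,\qquad ig=\langle\partial_y(e^{-v}r_x),e^{-v}r_x\rangle,$$ and set $U=fe^{2v}$, $V=ge^{2v}$. Then $$U_y+V_x+e^{2v}\beta_{xy}=0,$$ $$V_y+v_ye^{2v}\beta_y=U_x+v_xe^{2v}\beta_x,$$ $$\Delta v+e^{2v}-2(U^2+V^2)e^{-4v}-(\beta_xU+\beta_yV)e^{-2v}=0,$$ where $\Delta=\partial_x^2+\partial_y^2$.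
   Context: $S^5$ is the unit sphere in $\mathbb{C}^3$, $\mathcal{H}:S^5\to\mathbb{C}P^2$ is the Hopf fibration, and $\langle u,w\rangle=\sum_{j=1}^3u_j\bar w_j$ is the standard Hermitian product on $\mathbb{C}^3$, $|u|^2=\langle u,u\rangle$. An immersion into $\mathbb{C}P^2$ is Lagrangian if the pullback of the Fubini–Study form vanishes, and conformal if its induced metric is a multiple of $dx^2+dy^2$; the stated orthogonality relations hold for a horizontal lift $r$ of such an immersion. *)

From Stdlib Require Import Reals.
From Coquelicot Require Import Coquelicot.
Open Scope R_scope.

Definition connected2 (O : R * R -> Prop) : Prop :=
  forall A B : R * R -> Prop,
    @open (prod_UniformSpace R_UniformSpace R_UniformSpace) A ->
    @open (prod_UniformSpace R_UniformSpace R_UniformSpace) B ->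
    (forall p, O p -> A p \/ B p) ->
    (forall p, O p -> A p -> B p -> False) ->
    (exists p, O p /\ A p) -> (exists p, O p /\ B p) -> False.

Definition domain2 (O : R * R -> Prop) : Prop :=
  (exists p, O p) /\
  @open (prod_UniformSpace R_UniformSpace R_UniformSpace) O /\
  connected2 O.

Definition dx (f : R -> R -> R) : R -> R -> R :=
  fun x y => Derive (fun t => f t y) x.
Definition dy (f : R -> R -> R) : R -> R -> R :=
  fun x y => Derive (fun t => f x t) y.

Fixpoint dpart (l : list bool) (f : R -> R -> R) : R -> R -> R :=
  match l with
  | nil => f
  | cons b l' => (if b then dx else dy) (dpart l' f)
  end.

Definition smooth_on (O : R * R -> Prop) (f : R -> R -> R) : Prop :=
  forall (l : list bool) (x y : R), O (x, y) ->
    ex_derive (fun t => dpart l f t y) x /\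
    ex_derive (fun t => dpart l f x t) y /\
    @continuous (prod_UniformSpace R_UniformSpace R_UniformSpace) R_UniformSpace
      (fun p : R * R => dpart l f (fst p) (snd p)) (x, y).

Definition C3 : Type := (C * C * C)%type.

Definition c3_1 (u : C3) : C := fst (fst u).
Definition c3_2 (u : C3) : C := snd (fst u).
Definition c3_3 (u : C3) : C := snd u.

Definition herm (u w : C3) : C :=
  Cplus (Cplus (Cmult (c3_1 u) (Cconj (c3_1 w)))
               (Cmult (c3_2 u) (Cconj (c3_2 w))))
        (Cmult (c3_3 u) (Cconj (c3_3 w))).

(* |u| = sqrt <u,u> (<u,u> is real and nonnegative) *)
Definition c3norm (u : C3) : R := sqrt (Re (herm u u)).

Definition c3scale (a : C) (u : C3) : C3 :=
  (Cmult a (c3_1 u), Cmult a (c3_2 u), Cmult a (c3_3 u)).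

Definition cdx (f : R -> R -> C) : R -> R -> C :=
  fun x y => (dx (fun a b => Re (f a b)) x y, dx (fun a b => Im (f a b)) x y).
Definition cdy (f : R -> R -> C) : R -> R -> C :=
  fun x y => (dy (fun a b => Re (f a b)) x y, dy (fun a b => Im (f a b)) x y).

Definition vdx (r : R -> R -> C3) : R -> R -> C3 :=
  fun x y => (cdx (fun a b => c3_1 (r a b)) x y,
              cdx (fun a b => c3_2 (r a b)) x y,
              cdx (fun a b => c3_3 (r a b)) x y).
Definition vdy (r : R -> R -> C3) : R -> R -> C3 :=
  fun x y => (cdy (fun a b => c3_1 (r a b)) x y,
              cdy (fun a b => c3_2 (r a b)) x y,
              cdy (fun a b => c3_3 (r a b)) x y).

Definition smooth_on_C3 (O : R * R -> Prop) (r : R -> R -> C3) : Prop :=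
  smooth_on O (fun x y => Re (c3_1 (r x y))) /\
  smooth_on O (fun x y => Im (c3_1 (r x y))) /\
  smooth_on O (fun x y => Re (c3_2 (r x y))) /\
  smooth_on O (fun x y => Im (c3_2 (r x y))) /\
  smooth_on O (fun x y => Re (c3_3 (r x y))) /\
  smooth_on O (fun x y => Im (c3_3 (r x y))).

Definition det3 (a b c : C3) : C :=
  let m := fun (u : C3) (i : nat) =>
    match i with 1%nat => c3_1 u | 2%nat => c3_2 u | _ => c3_3 u end in
  Cminus
   (Cplus (Cplus (Cmult (m a 1%nat) (Cmult (m b 2%nat) (m c 3%nat)))
                 (Cmult (m a 2%nat) (Cmult (m b 3%nat) (m c 1%nat))))
          (Cmult (m a 3%nat) (Cmult (m b 1%nat) (m c 2%nat))))
   (Cplus (Cplus (Cmult (m a 3%nat) (Cmult (m b 2%nat) (m c 1%nat)))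
                 (Cmult (m a 1%nat) (Cmult (m b 3%nat) (m c 2%nat))))
          (Cmult (m a 2%nat) (Cmult (m b 1%nat) (m c 3%nat)))).

(* The matrix M with rows a, b, c is in SU(3): M M^* = I, i.e. the
   (i,j) entry <row_i, row_j> is the Kronecker delta, and det M = 1. *)
Definition in_SU3 (a b c : C3) : Prop :=
  herm a a = RtoC 1 /\ herm b b = RtoC 1 /\ herm c c = RtoC 1 /\
  herm a b = RtoC 0 /\ herm a c = RtoC 0 /\ herm b c = RtoC 0 /\
  herm b a = RtoC 0 /\ herm c a = RtoC 0 /\ herm c b = RtoC 0 /\
  det3 a b c = RtoC 1.

Definition cexpi (t : R) : C := (cos t, sin t).

From Stdlib Require Import Reals Lra.
From Coquelicot Require Import Coquelicot.
Open Scope R_scope.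

(* The frame (r, r_x, r_y) is orthogonal with Gram matrix diag(1, e^{2v}, e^{2v}) and, by the
   SU(3) condition, det(r, r_x, r_y) = e^{2v - i beta}.  Differentiating these relations once,
   together with the definitions of f and g, expresses every product <r_ij, r_k> of a second
   derivative with the frame through v, beta, U = Im <r_xy, r_y> and V = Im <r_xy, r_x>.  The
   three equations are the imaginary and real parts of the integrability conditions
     d_y <r_xx, w> - d_x <r_xy, w> = <r_xx, w_y> - <r_xy, w_x>      (w = r_x, r_y),
   which hold because r_xxy = r_xyx; their right-hand sides are evaluated by expanding in the
   frame. *)

Lemma Cconj_RtoC (x : R) : Cconj (RtoC x) = RtoC x.
Proof. unfold Cconj, RtoC; simpl; f_equal; ring. Qed.

Lemma Cplus_eq0_opp (x y : C) : (x + y = 0)%C -> x = (- y)%C.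
Proof. intro H. replace x with (x + y - y)%C by ring. rewrite H. ring. Qed.

Lemma exp_sqr (x : R) : (exp x * exp x = exp (2 * x))%C.
Proof. rewrite <- RtoC_mult, <- exp_plus. do 2 f_equal. ring. Qed.

Lemma exp_opp_sqr (x : R) : exp (- x) * exp (- x) = / exp (2 * x).
Proof. rewrite <- exp_plus, <- exp_Ropp. f_equal. ring. Qed.

Lemma cexpi_opp_mul t : (cexpi (- t) * cexpi t = 1)%C.
Proof.
  unfold cexpi, Cmult, RtoC; simpl. rewrite cos_neg, sin_neg.
  f_equal; [rewrite <- (sin2_cos2 t); unfold Rsqr|]; ring.
Qed.

Lemma Cconj_cexpi t : Cconj (cexpi t) = cexpi (- t).
Proof. unfold cexpi, Cconj; simpl. now rewrite cos_neg, sin_neg. Qed.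

Lemma cexpi_neq0 t : cexpi t <> 0.
Proof.
  intro H. apply R1_neq_R0, RtoC_inj.
  now rewrite <- (cexpi_opp_mul t), H, Cmult_0_r.
Qed.

(** * Hermitian algebra in C^3 *)

Definition c3add (u w : C3) : C3 :=
  (Cplus (c3_1 u) (c3_1 w), Cplus (c3_2 u) (c3_2 w), Cplus (c3_3 u) (c3_3 w)).

Definition c3comb (x y z : C) (a b c : C3) : C3 :=
  c3add (c3add (c3scale x a) (c3scale y b)) (c3scale z c).

Definition orthogonal3 (a b c : C3) : Prop :=
  herm a b = 0 /\ herm a c = 0 /\ herm b c = 0.

Ltac c3_ring :=
  repeat match goal with
  | u : C3 |- _ => let a := fresh "a" in let b := fresh "b" in let c := fresh "c" in
                   destruct u as [[a b] c]
  end;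
  cbv [herm det3 c3comb c3scale c3add c3_1 c3_2 c3_3 fst snd];
  repeat rewrite ?Cplus_conj, ?Cmult_conj, ?Copp_conj, ?Cminus_conj, ?Cconj_conj;
  lazymatch goal with
  | |- (_, _, _) = (_, _, _) => f_equal; [f_equal|]; ring
  | _ => ring
  end.

Lemma herm_conj_sym u w : herm u w = Cconj (herm w u).
Proof. c3_ring. Qed.

Lemma herm_self_conj u : Cconj (herm u u) = herm u u.
Proof. now rewrite <- herm_conj_sym. Qed.

Lemma herm_addl u1 u2 w : herm (c3add u1 u2) w = (herm u1 w + herm u2 w)%C.
Proof. c3_ring. Qed.

Lemma herm_scalel l u w : herm (c3scale l u) w = (l * herm u w)%C.
Proof. c3_ring. Qed.

Lemma herm_scaler l u w : herm u (c3scale l w) = (Cconj l * herm u w)%C.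
Proof. c3_ring. Qed.

Lemma herm_scale2 l m u w : herm (c3scale l u) (c3scale m w) = (l * Cconj m * herm u w)%C.
Proof. rewrite herm_scalel, herm_scaler. ring. Qed.

Lemma herm_combr x y z a b c u :
  herm u (c3comb x y z a b c) =
  (Cconj x * herm u a + Cconj y * herm u b + Cconj z * herm u c)%C.
Proof. c3_ring. Qed.

Lemma det3_scale l m n a b c :
  det3 (c3scale l a) (c3scale m b) (c3scale n c) = (l * m * n * det3 a b c)%C.
Proof. c3_ring. Qed.

Lemma det3_comb1 x y z a b c : det3 (c3comb x y z a b c) b c = (x * det3 a b c)%C.
Proof. c3_ring. Qed.

Lemma det3_comb2 x y z a b c : det3 a (c3comb x y z a b c) c = (y * det3 a b c)%C.
Proof. c3_ring. Qed.

Lemma det3_comb3 x y z a b c : det3 a b (c3comb x y z a b c) = (z * det3 a b c)%C.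
Proof. c3_ring. Qed.

Lemma c3scale_comp l m u : c3scale l (c3scale m u) = c3scale (l * m) u.
Proof. c3_ring. Qed.

Lemma c3scale_1 u : c3scale 1 u = u.
Proof. c3_ring. Qed.

Lemma herm_eq0_sym u w : herm u w = 0 -> herm w u = 0.
Proof. intro H. now rewrite herm_conj_sym, H, Cconj_RtoC. Qed.

Lemma herm_combl x y z a b c u :
  herm (c3comb x y z a b c) u = (x * herm a u + y * herm b u + z * herm c u)%C.
Proof. c3_ring. Qed.

Definition c3conj (u : C3) : C3 := (Cconj (c3_1 u), Cconj (c3_2 u), Cconj (c3_3 u)).

Definition c3cross (a b : C3) : C3 :=
  (c3_2 a * c3_3 b - c3_3 a * c3_2 b, c3_3 a * c3_1 b - c3_1 a * c3_3 b,
   c3_1 a * c3_2 b - c3_2 a * c3_1 b)%C.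

(* Cramer's rule for the system with rows a, b, c in the unknown [c3conj u]. *)
Lemma det3_cramer a b c u :
  c3scale (det3 a b c) (c3conj u) =
  c3comb (herm a u) (herm b u) (herm c u) (c3cross b c) (c3cross c a) (c3cross a b).
Proof. cbv [c3conj c3cross]. c3_ring. Qed.

Lemma eq_of_herm_basis a b c u w : det3 a b c <> 0 ->
  herm u a = herm w a -> herm u b = herm w b -> herm u c = herm w c -> u = w.
Proof.
  intros Hd Ha Hb Hc.
  assert (Hconj : c3scale (det3 a b c) (c3conj u) = c3scale (det3 a b c) (c3conj w)).
  { rewrite !det3_cramer, (herm_conj_sym a u), (herm_conj_sym b u), (herm_conj_sym c u),
      Ha, Hb, Hc, <- !herm_conj_sym. reflexivity. }
  apply (f_equal (c3scale (/ det3 a b c))) in Hconj.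
  rewrite !c3scale_comp, Cinv_l, !c3scale_1 in Hconj by exact Hd.
  apply (f_equal c3conj) in Hconj. revert Hconj.
  destruct u as [[u1 u2] u3], w as [[w1 w2] w3].
  cbv [c3conj c3_1 c3_2 c3_3 fst snd]. now rewrite !Cconj_conj.
Qed.

Lemma orthogonal3_expand a b c w :
  orthogonal3 a b c -> herm a a <> 0 -> herm b b <> 0 -> herm c c <> 0 ->
  det3 a b c <> 0 ->
  w = c3comb (herm w a / herm a a) (herm w b / herm b b) (herm w c / herm c c) a b c.
Proof.
  intros (Hab & Hac & Hbc) Ha Hb Hc Hd.
  apply (eq_of_herm_basis a b c); [exact Hd| | |]; rewrite herm_combl;
    rewrite ?Hab, ?Hac, ?Hbc, ?(herm_eq0_sym _ _ Hab), ?(herm_eq0_sym _ _ Hac),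
      ?(herm_eq0_sym _ _ Hbc); field; auto.
Qed.

Lemma herm_parseval_orthogonal3 a b c u w :
  orthogonal3 a b c -> herm a a <> 0 -> herm b b <> 0 -> herm c c <> 0 ->
  det3 a b c <> 0 ->
  herm u w = (herm u a * Cconj (herm w a) / herm a a + herm u b * Cconj (herm w b) / herm b b
              + herm u c * Cconj (herm w c) / herm c c)%C.
Proof.
  intros Ho Ha Hb Hc Hd.
  rewrite (orthogonal3_expand a b c w Ho Ha Hb Hc Hd) at 1.
  rewrite herm_combr, !Cdiv_conj, !herm_self_conj by assumption.
  field; auto.
Qed.

Lemma det3_jacobi_orthogonal3 a b c a' b' c' :
  orthogonal3 a b c -> herm a a <> 0 -> herm b b <> 0 -> herm c c <> 0 ->
  det3 a b c <> 0 ->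
  (det3 a' b c + det3 a b' c + det3 a b c')%C =
  ((herm a' a / herm a a + herm b' b / herm b b + herm c' c / herm c c) * det3 a b c)%C.
Proof.
  intros Ho Ha Hb Hc Hd.
  rewrite (orthogonal3_expand a b c a') at 1 by assumption.
  rewrite (orthogonal3_expand a b c b') at 1 by assumption.
  rewrite (orthogonal3_expand a b c c') at 1 by assumption.
  rewrite det3_comb1, det3_comb2, det3_comb3. ring.
Qed.

(** * Derivatives of C- and C^3-valued functions of one variable *)

Definition is_derive_C (h : R -> C) (t : R) (d : C) : Prop :=
  is_derive (fun s => Re (h s)) t (Re d) /\ is_derive (fun s => Im (h s)) t (Im d).

Definition is_derive_C3 (h : R -> C3) (t : R) (d : C3) : Prop :=
  is_derive_C (fun s => c3_1 (h s)) t (c3_1 d) /\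
  is_derive_C (fun s => c3_2 (h s)) t (c3_2 d) /\
  is_derive_C (fun s => c3_3 (h s)) t (c3_3 d).

Lemma is_derive_C_ext_loc (h1 h2 : R -> C) t d :
  locally t (fun s => h1 s = h2 s) -> is_derive_C h1 t d -> is_derive_C h2 t d.
Proof.
  intros Heq [HRe HIm].
  split; (eapply is_derive_ext_loc; [|eassumption]);
    (eapply filter_imp; [|exact Heq]); intros s e; now rewrite e.
Qed.

Lemma is_derive_C_unique (h : R -> C) t d1 d2 :
  is_derive_C h t d1 -> is_derive_C h t d2 -> d1 = d2.
Proof.
  intros [H1 K1] [H2 K2]. apply injective_projections.
  - exact (eq_trans (eq_sym (is_derive_unique _ _ _ H1)) (is_derive_unique _ _ _ H2)).
  - exact (eq_trans (eq_sym (is_derive_unique _ _ _ K1)) (is_derive_unique _ _ _ K2)).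
Qed.

Lemma is_derive_C_const (c : C) t : is_derive_C (fun _ => c) t 0.
Proof. split; exact (is_derive_const _ t). Qed.

Lemma is_derive_C_RtoC (F : R -> R) t d :
  is_derive F t d -> is_derive_C (fun s => RtoC (F s)) t (RtoC d).
Proof. intro H. split; [exact H | exact (is_derive_const _ t)]. Qed.

Lemma is_derive_ext_eq (F G : R -> R) t d d' :
  is_derive F t d -> (forall s, F s = G s) -> d = d' -> is_derive G t d'.
Proof. intros H HFG <-. exact (is_derive_ext F G t d HFG H). Qed.

Lemma is_derive_unique_value (F : R -> R) t d1 d2 : is_derive F t d1 -> is_derive F t d2 -> d1 = d2.
Proof. intros H1 H2. now rewrite <- (is_derive_unique _ _ _ H1), (is_derive_unique _ _ _ H2). Qed.

Ltac C_ring := unfold Re, Im, Cplus, Cmult, Copp, Cconj, RtoC; cbn; ring.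

Ltac C_eq := apply injective_projections; unfold Cminus, Cplus, Cmult, Copp, Cconj, RtoC, Ci;
  cbn; ring.

Lemma is_derive_C_plus (h1 h2 : R -> C) t d1 d2 :
  is_derive_C h1 t d1 -> is_derive_C h2 t d2 ->
  is_derive_C (fun s => h1 s + h2 s)%C t (d1 + d2)%C.
Proof.
  intros [A1 B1] [A2 B2]. split.
  - eapply is_derive_ext_eq; [apply (is_derive_plus _ _ _ _ _ A1 A2) | intro s |]; C_ring.
  - eapply is_derive_ext_eq; [apply (is_derive_plus _ _ _ _ _ B1 B2) | intro s |]; C_ring.
Qed.

Lemma is_derive_C_opp (h : R -> C) t d :
  is_derive_C h t d -> is_derive_C (fun s => - h s)%C t (- d)%C.
Proof.
  intros [A B]. split.
  - eapply is_derive_ext_eq; [apply (is_derive_opp _ _ _ A) | intro s |]; C_ring.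
  - eapply is_derive_ext_eq; [apply (is_derive_opp _ _ _ B) | intro s |]; C_ring.
Qed.

Lemma is_derive_C_conj (h : R -> C) t d :
  is_derive_C h t d -> is_derive_C (fun s => Cconj (h s)) t (Cconj d).
Proof.
  intros [A B]. split; [exact A|].
  eapply is_derive_ext_eq; [apply (is_derive_opp _ _ _ B) | intro s |]; C_ring.
Qed.

Lemma is_derive_C_mult (h1 h2 : R -> C) t d1 d2 :
  is_derive_C h1 t d1 -> is_derive_C h2 t d2 ->
  is_derive_C (fun s => h1 s * h2 s)%C t (d1 * h2 t + h1 t * d2)%C.
Proof.
  intros [A1 B1] [A2 B2].
  assert (Hm : forall n m : R, mult n m = mult m n) by (intros; apply Rmult_comm).
  split.
  - eapply is_derive_ext_eq; [apply is_derive_minus;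
      [apply (is_derive_mult _ _ _ _ _ A1 A2 Hm) | apply (is_derive_mult _ _ _ _ _ B1 B2 Hm)]
      | intro s |]; C_ring.
  - eapply is_derive_ext_eq; [apply is_derive_plus;
      [apply (is_derive_mult _ _ _ _ _ A1 B2 Hm) | apply (is_derive_mult _ _ _ _ _ B1 A2 Hm)]
      | intro s |]; C_ring.
Qed.

Lemma is_derive_C_cexpi (F : R -> R) t d :
  is_derive F t d -> is_derive_C (fun s => cexpi (F s)) t (Ci * d * cexpi (F t))%C.
Proof.
  intro H. split.
  - eapply is_derive_ext_eq;
      [apply (is_derive_comp cos F t (- sin (F t)) d); [|exact H] | intro s |].
    + apply is_derive_Reals, derivable_pt_lim_cos.
    + reflexivity.
    + unfold cexpi, Ci. C_ring.
  - eapply is_derive_ext_eq;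
      [apply (is_derive_comp sin F t (cos (F t)) d); [|exact H] | intro s |].
    + apply is_derive_Reals, derivable_pt_lim_sin.
    + reflexivity.
    + unfold cexpi, Ci. C_ring.
Qed.

Lemma is_derive_C3_scale (l : R -> C) (u : R -> C3) t l' u' :
  is_derive_C l t l' -> is_derive_C3 u t u' ->
  is_derive_C3 (fun s => c3scale (l s) (u s)) t (c3add (c3scale l' (u t)) (c3scale (l t) u')).
Proof. intros Hl (H1 & H2 & H3). split; [|split]; apply is_derive_C_mult; assumption. Qed.

Ltac derive_C :=
  lazymatch goal with
  | |- is_derive_C (fun s => Cplus _ _) _ _ => apply is_derive_C_plus; derive_C
  | |- is_derive_C (fun s => Copp _) _ _ => apply is_derive_C_opp; derive_C
  | |- is_derive_C (fun s => Cmult _ _) _ _ => apply is_derive_C_mult; derive_C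
  | |- is_derive_C (fun s => Cconj _) _ _ => apply is_derive_C_conj; derive_C
  | |- _ => eassumption
  end.

Lemma is_derive_C_eq (h : R -> C) t d d' : is_derive_C h t d -> d = d' -> is_derive_C h t d'.
Proof. now intros H <-. Qed.

Lemma is_derive_herm (u w : R -> C3) t u' w' :
  is_derive_C3 u t u' -> is_derive_C3 w t w' ->
  is_derive_C (fun s => herm (u s) (w s)) t (herm u' (w t) + herm (u t) w')%C.
Proof.
  intros (A1 & A2 & A3) (B1 & B2 & B3). unfold herm.
  eapply is_derive_C_eq.
  - derive_C.
  - cbv beta; ring.
Qed.

Lemma is_derive_det3 (a b c : R -> C3) t a' b' c' :
  is_derive_C3 a t a' -> is_derive_C3 b t b' -> is_derive_C3 c t c' ->
  is_derive_C (fun s => det3 (a s) (b s) (c s)) t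
    (det3 a' (b t) (c t) + det3 (a t) b' (c t) + det3 (a t) (b t) c')%C.
Proof.
  intros (A1 & A2 & A3) (B1 & B2 & B3) (C1 & C2 & C3). unfold det3, Cminus. cbv beta iota zeta.
  eapply is_derive_C_eq.
  - derive_C.
  - cbv beta. ring.
Qed.

(** * Partial derivatives on an open subset of the plane *)

Lemma open_locally_2d (O : R * R -> Prop) a b :
  open O -> O (a, b) -> locally_2d (fun s t => O (s, t)) a b.
Proof.
  intros HO Hab. apply locally_2d_locally.
  apply (filter_imp O); [intros [s t]; auto | exact (HO _ Hab)].
Qed.

Lemma locally_line_x (O : R * R -> Prop) (P : R -> R -> Prop) a b :
  open O -> O (a, b) -> (forall s t, O (s, t) -> P s t) -> locally a (fun s => P s b).
Proof.
  intros HO Hab HP. apply (locally_2d_1d_const_y P).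
  apply (locally_2d_impl (fun s t => O (s, t))); [apply locally_2d_forall, HP|].
  now apply open_locally_2d.
Qed.

Lemma locally_line_y (O : R * R -> Prop) (P : R -> R -> Prop) a b :
  open O -> O (a, b) -> (forall s t, O (s, t) -> P s t) -> locally b (fun t => P a t).
Proof.
  intros HO Hab HP. apply (locally_2d_1d_const_x P).
  apply (locally_2d_impl (fun s t => O (s, t))); [apply locally_2d_forall, HP|].
  now apply open_locally_2d.
Qed.

Lemma dpart_app l1 l2 F : dpart (l1 ++ l2) F = dpart l1 (dpart l2 F).
Proof. induction l1 as [|d l1 IH]; simpl; [reflexivity | now rewrite IH]. Qed.

Lemma smooth_on_dpart O F l : smooth_on O F -> smooth_on O (dpart l F).
Proof. intros H l' x y Hxy. rewrite <- dpart_app. now apply H. Qed.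

Lemma smooth_on_C3_vdx O P : smooth_on_C3 O P -> smooth_on_C3 O (vdx P).
Proof.
  intros (H1 & H2 & H3 & H4 & H5 & H6).
  pose proof (fun F => smooth_on_dpart O F (true :: nil)) as D.
  exact (conj (D _ H1) (conj (D _ H2) (conj (D _ H3) (conj (D _ H4) (conj (D _ H5) (D _ H6)))))).
Qed.

Lemma smooth_on_C3_vdy O P : smooth_on_C3 O P -> smooth_on_C3 O (vdy P).
Proof.
  intros (H1 & H2 & H3 & H4 & H5 & H6).
  pose proof (fun F => smooth_on_dpart O F (false :: nil)) as D.
  exact (conj (D _ H1) (conj (D _ H2) (conj (D _ H3) (conj (D _ H4) (conj (D _ H5) (D _ H6)))))).
Qed.

Lemma is_derive_dx O F a b : smooth_on O F -> O (a, b) -> is_derive (fun t => F t b) a (dx F a b).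
Proof. intros H Hab. apply Derive_correct, (H nil a b Hab). Qed.

Lemma is_derive_dy O F a b : smooth_on O F -> O (a, b) -> is_derive (fun t => F a t) b (dy F a b).
Proof. intros H Hab. apply Derive_correct, (H nil a b Hab). Qed.

Lemma is_derive_C3_vdx O P a b :
  smooth_on_C3 O P -> O (a, b) -> is_derive_C3 (fun t => P t b) a (vdx P a b).
Proof.
  intros (H1 & H2 & H3 & H4 & H5 & H6) Hab.
  exact (conj (conj (is_derive_dx O _ a b H1 Hab) (is_derive_dx O _ a b H2 Hab))
    (conj (conj (is_derive_dx O _ a b H3 Hab) (is_derive_dx O _ a b H4 Hab))
          (conj (is_derive_dx O _ a b H5 Hab) (is_derive_dx O _ a b H6 Hab)))).
Qed.

Lemma is_derive_C3_vdy O P a b :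
  smooth_on_C3 O P -> O (a, b) -> is_derive_C3 (fun t => P a t) b (vdy P a b).
Proof.
  intros (H1 & H2 & H3 & H4 & H5 & H6) Hab.
  exact (conj (conj (is_derive_dy O _ a b H1 Hab) (is_derive_dy O _ a b H2 Hab))
    (conj (conj (is_derive_dy O _ a b H3 Hab) (is_derive_dy O _ a b H4 Hab))
          (conj (is_derive_dy O _ a b H5 Hab) (is_derive_dy O _ a b H6 Hab)))).
Qed.

Lemma dx_of (F : R -> R -> R) a b d : is_derive (fun s => F s b) a d -> dx F a b = d.
Proof. apply is_derive_unique. Qed.

Lemma dy_of (F : R -> R -> R) a b d : is_derive (fun t => F a t) b d -> dy F a b = d.
Proof. apply is_derive_unique. Qed.

Lemma vdx_of (h : R -> R -> C3) a b d : is_derive_C3 (fun t => h t b) a d -> vdx h a b = d.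
Proof.
  intros ((A1 & B1) & (A2 & B2) & (A3 & B3)).
  destruct d as [[[? ?] [? ?]] [? ?]]. unfold vdx, vdy, cdx, cdy.
  f_equal; [f_equal|]; f_equal; apply is_derive_unique.
  all: [> exact A1 | exact B1 | exact A2 | exact B2 | exact A3 | exact B3].
Qed.

Lemma vdy_of (h : R -> R -> C3) a b d : is_derive_C3 (fun t => h a t) b d -> vdy h a b = d.
Proof.
  intros ((A1 & B1) & (A2 & B2) & (A3 & B3)).
  destruct d as [[[? ?] [? ?]] [? ?]]. unfold vdx, vdy, cdx, cdy.
  f_equal; [f_equal|]; f_equal; apply is_derive_unique.
  all: [> exact A1 | exact B1 | exact A2 | exact B2 | exact A3 | exact B3].
Qed.

Lemma dx_dy_comm O F a b : open O -> smooth_on O F -> O (a, b) -> dx (dy F) a b = dy (dx F) a b.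
Proof.
  intros HO HF Hab. apply Schwarz.
  - destruct (open_locally_2d O a b HO Hab) as [e He]. exists e. intros s t Hs Ht.
    pose proof (He s t Hs Ht) as Hst.
    destruct (HF nil s t Hst) as (Ex & Ey & _).
    destruct (HF (true :: nil)%list s t Hst) as (_ & Exy & _).
    destruct (HF (false :: nil)%list s t Hst) as (Eyx & _).
    now repeat split.
  - apply continuity_2d_pt_filterlim, (HF (true :: false :: nil)%list a b Hab).
  - apply continuity_2d_pt_filterlim, (HF (false :: true :: nil)%list a b Hab).
Qed.

Lemma vdx_vdy_comm O P a b :
  open O -> smooth_on_C3 O P -> O (a, b) -> vdx (vdy P) a b = vdy (vdx P) a b.
Proof.
  intros HO (H1 & H2 & H3 & H4 & H5 & H6) Hab.
  unfold vdx, vdy, cdx, cdy. cbn [c3_1 c3_2 c3_3 Re Im fst snd].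
  f_equal; [f_equal|]; f_equal; apply (dx_dy_comm O); assumption.
Qed.

Lemma herm_vdx_const O P Q c a b :
  open O -> smooth_on_C3 O P -> smooth_on_C3 O Q ->
  (forall s t, O (s, t) -> herm (P s t) (Q s t) = c) -> O (a, b) ->
  (herm (vdx P a b) (Q a b) + herm (P a b) (vdx Q a b))%C = 0.
Proof.
  intros HO HP HQ Hc Hab. apply (is_derive_C_unique (fun s => herm (P s b) (Q s b)) a).
  - exact (is_derive_herm _ _ _ _ _ (is_derive_C3_vdx O P a b HP Hab)
      (is_derive_C3_vdx O Q a b HQ Hab)).
  - eapply is_derive_C_ext_loc; [|apply (is_derive_C_const c)].
    apply (locally_line_x O (fun s t => c = herm (P s t) (Q s t))); [exact HO | exact Hab |].
    intros s t Hst. now rewrite Hc.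
Qed.

Lemma herm_vdy_const O P Q c a b :
  open O -> smooth_on_C3 O P -> smooth_on_C3 O Q ->
  (forall s t, O (s, t) -> herm (P s t) (Q s t) = c) -> O (a, b) ->
  (herm (vdy P a b) (Q a b) + herm (P a b) (vdy Q a b))%C = 0.
Proof.
  intros HO HP HQ Hc Hab. apply (is_derive_C_unique (fun t => herm (P a t) (Q a t)) b).
  - exact (is_derive_herm _ _ _ _ _ (is_derive_C3_vdy O P a b HP Hab)
      (is_derive_C3_vdy O Q a b HQ Hab)).
  - eapply is_derive_C_ext_loc; [|apply (is_derive_C_const c)].
    apply (locally_line_y O (fun s t => c = herm (P s t) (Q s t))); [exact HO | exact Hab |].
    intros s t Hst. now rewrite Hc.
Qed.

Lemma herm_vdx_scale_exp O v P a b :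
  smooth_on O v -> smooth_on_C3 O P -> O (a, b) ->
  herm (vdx (fun s t => c3scale (RtoC (exp (- v s t))) (P s t)) a b)
       (c3scale (RtoC (exp (- v a b))) (P a b)) =
  (RtoC (/ exp (2 * v a b)) * (herm (vdx P a b) (P a b) - dx v a b * herm (P a b) (P a b)))%C.
Proof.
  intros Hv HP Hab.
  pose proof (is_derive_comp exp (fun s => - v s b) a _ _ (is_derive_exp _)
    (is_derive_opp _ _ _ (is_derive_dx O v a b Hv Hab))) as Hk.
  rewrite (vdx_of _ a b _ (is_derive_C3_scale _ _ _ _ _ (is_derive_C_RtoC _ _ _ Hk)
    (is_derive_C3_vdx O P a b HP Hab))).
  rewrite herm_addl, !herm_scalel, !herm_scaler, Cconj_RtoC, <- exp_opp_sqr.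
  unfold scal; simpl. unfold mult; simpl. rewrite !RtoC_mult, RtoC_opp. ring.
Qed.

Lemma herm_vdy_scale_exp O v P a b :
  smooth_on O v -> smooth_on_C3 O P -> O (a, b) ->
  herm (vdy (fun s t => c3scale (RtoC (exp (- v s t))) (P s t)) a b)
       (c3scale (RtoC (exp (- v a b))) (P a b)) =
  (RtoC (/ exp (2 * v a b)) * (herm (vdy P a b) (P a b) - dy v a b * herm (P a b) (P a b)))%C.
Proof.
  intros Hv HP Hab.
  pose proof (is_derive_comp exp (fun t => - v a t) b _ _ (is_derive_exp _)
    (is_derive_opp _ _ _ (is_derive_dy O v a b Hv Hab))) as Hk.
  rewrite (vdy_of _ a b _ (is_derive_C3_scale _ _ _ _ _ (is_derive_C_RtoC _ _ _ Hk)
    (is_derive_C3_vdy O P a b HP Hab))).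
  rewrite herm_addl, !herm_scalel, !herm_scaler, Cconj_RtoC, <- exp_opp_sqr.
  unfold scal; simpl. unfold mult; simpl. rewrite !RtoC_mult, RtoC_opp. ring.
Qed.

Lemma is_derive_exp2_x O v a b : smooth_on O v -> O (a, b) ->
  is_derive (fun s => exp (2 * v s b)) a (2 * dx v a b * exp (2 * v a b)).
Proof.
  intros Hv Hab.
  exact (is_derive_comp exp (fun s => 2 * v s b) a _ _ (is_derive_exp _)
    (is_derive_scal _ _ 2 _ (is_derive_dx O v a b Hv Hab))).
Qed.

Lemma is_derive_exp2_y O v a b : smooth_on O v -> O (a, b) ->
  is_derive (fun t => exp (2 * v a t)) b (2 * dy v a b * exp (2 * v a b)).
Proof.
  intros Hv Hab.
  exact (is_derive_comp exp (fun t => 2 * v a t) b _ _ (is_derive_exp _)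
    (is_derive_scal _ _ 2 _ (is_derive_dy O v a b Hv Hab))).
Qed.

Lemma is_derive_exp2_mul_x O v F a b :
  smooth_on O v -> smooth_on O F -> O (a, b) ->
  is_derive (fun s => exp (2 * v s b) * F s b) a
    (exp (2 * v a b) * (2 * dx v a b * F a b + dx F a b)).
Proof.
  intros Hv HF Hab.
  eapply is_derive_ext_eq; [apply (is_derive_mult _ _ _ _ _ (is_derive_exp2_x O v a b Hv Hab)
    (is_derive_dx O F a b HF Hab)); intros; apply Rmult_comm | reflexivity |].
  unfold plus, mult; simpl. ring.
Qed.

Lemma is_derive_exp2_mul_y O v F a b :
  smooth_on O v -> smooth_on O F -> O (a, b) ->
  is_derive (fun t => exp (2 * v a t) * F a t) b
    (exp (2 * v a b) * (2 * dy v a b * F a b + dy F a b)).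
Proof.
  intros Hv HF Hab.
  eapply is_derive_ext_eq; [apply (is_derive_mult _ _ _ _ _ (is_derive_exp2_y O v a b Hv Hab)
    (is_derive_dy O F a b HF Hab)); intros; apply Rmult_comm | reflexivity |].
  unfold plus, mult; simpl. ring.
Qed.

Lemma herm_identity_dx O P Q (F G : R -> R -> R) a b :
  open O -> smooth_on_C3 O P -> smooth_on_C3 O Q ->
  (forall s t, O (s, t) -> herm (P s t) (Q s t) = (F s t, G s t)) -> O (a, b) ->
  let d := (herm (vdx P a b) (Q a b) + herm (P a b) (vdx Q a b))%C in
  is_derive (fun s => F s b) a (Re d) /\ is_derive (fun s => G s b) a (Im d).
Proof.
  intros HO HP HQ Hid Hab d.
  destruct (is_derive_herm _ _ _ _ _ (is_derive_C3_vdx O P a b HP Hab)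
    (is_derive_C3_vdx O Q a b HQ Hab)) as [HRe HIm].
  split; [eapply is_derive_ext_loc; [|exact HRe] | eapply is_derive_ext_loc; [|exact HIm]].
  - apply (locally_line_x O (fun s t => Re (herm (P s t) (Q s t)) = F s t)); auto.
    intros s t Hst. now rewrite Hid.
  - apply (locally_line_x O (fun s t => Im (herm (P s t) (Q s t)) = G s t)); auto.
    intros s t Hst. now rewrite Hid.
Qed.

Lemma herm_identity_dy O P Q (F G : R -> R -> R) a b :
  open O -> smooth_on_C3 O P -> smooth_on_C3 O Q ->
  (forall s t, O (s, t) -> herm (P s t) (Q s t) = (F s t, G s t)) -> O (a, b) ->
  let d := (herm (vdy P a b) (Q a b) + herm (P a b) (vdy Q a b))%C in
  is_derive (fun t => F a t) b (Re d) /\ is_derive (fun t => G a t) b (Im d).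
Proof.
  intros HO HP HQ Hid Hab d.
  destruct (is_derive_herm _ _ _ _ _ (is_derive_C3_vdy O P a b HP Hab)
    (is_derive_C3_vdy O Q a b HQ Hab)) as [HRe HIm].
  split; [eapply is_derive_ext_loc; [|exact HRe] | eapply is_derive_ext_loc; [|exact HIm]].
  - apply (locally_line_y O (fun s t => Re (herm (P s t) (Q s t)) = F s t)); auto.
    intros s t Hst. now rewrite Hid.
  - apply (locally_line_y O (fun s t => Im (herm (P s t) (Q s t)) = G s t)); auto.
    intros s t Hst. now rewrite Hid.
Qed.

(** * The frame (r, r_x, r_y) *)

Section LagrangianFrame.

Variables (Omega : R * R -> Prop) (r : R -> R -> C3) (v beta f g : R -> R -> R).
Hypothesis Omega_open : open Omega.
Hypothesis r_smooth : smooth_on_C3 Omega r.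
Hypothesis v_smooth : smooth_on Omega v.
Hypothesis beta_smooth : smooth_on Omega beta.
Hypothesis frame_SU3 : forall x y, Omega (x, y) ->
  in_SU3 (c3scale (cexpi (beta x y)) (r x y))
         (c3scale (RtoC (exp (- v x y))) (vdx r x y))
         (c3scale (RtoC (exp (- v x y))) (vdy r x y)).
Hypothesis f_def : forall x y, Omega (x, y) ->
  Cmult Ci (RtoC (f x y)) =
  herm (vdx (fun a b => c3scale (RtoC (exp (- v a b))) (vdy r a b)) x y)
       (c3scale (RtoC (exp (- v x y))) (vdy r x y)).
Hypothesis g_def : forall x y, Omega (x, y) ->
  Cmult Ci (RtoC (g x y)) =
  herm (vdy (fun a b => c3scale (RtoC (exp (- v a b))) (vdx r a b)) x y)
       (c3scale (RtoC (exp (- v x y))) (vdx r x y)).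

Local Notation rx := (vdx r).
Local Notation ry := (vdy r).
Local Notation rxx := (vdx (vdx r)).
Local Notation rxy := (vdy (vdx r)).
Local Notation ryy := (vdy (vdy r)).
Local Notation E a b := (exp (2 * v a b)).
Local Notation U := (fun s t => f s t * exp (2 * v s t)).
Local Notation V := (fun s t => g s t * exp (2 * v s t)).

Let rx_smooth := smooth_on_C3_vdx _ _ r_smooth.
Let ry_smooth := smooth_on_C3_vdy _ _ r_smooth.
Let rxx_smooth := smooth_on_C3_vdx _ _ rx_smooth.
Let rxy_smooth := smooth_on_C3_vdy _ _ rx_smooth.

Lemma ryx_rxy a b : Omega (a, b) -> vdx ry a b = rxy a b.
Proof. exact (vdx_vdy_comm _ _ a b Omega_open r_smooth). Qed.

Lemma rxyx_rxxy a b : Omega (a, b) -> vdx rxy a b = vdy rxx a b.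
Proof. exact (vdx_vdy_comm _ _ a b Omega_open rx_smooth). Qed.

Lemma frame_gram a b : Omega (a, b) ->
  orthogonal3 (r a b) (rx a b) (ry a b) /\
  herm (r a b) (r a b) = 1 /\ herm (rx a b) (rx a b) = E a b /\
  herm (ry a b) (ry a b) = E a b /\
  det3 (r a b) (rx a b) (ry a b) = (E a b * cexpi (- beta a b))%C.
Proof.
  intro H.
  destruct (frame_SU3 a b H) as (h00 & h11 & h22 & h01 & h02 & h12 & _ & _ & _ & hdet).
  set (e0 := c3scale (cexpi (beta a b)) (r a b)) in *.
  set (e1 := c3scale (RtoC (exp (- v a b))) (rx a b)) in *.
  set (e2 := c3scale (RtoC (exp (- v a b))) (ry a b)) in *.
  assert (Hexp : (exp (v a b) * exp (- v a b) = 1)%C).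
  { now rewrite <- RtoC_mult, <- exp_plus, Rplus_opp_r, exp_0. }
  assert (Hr : r a b = c3scale (cexpi (- beta a b)) e0).
  { unfold e0. now rewrite c3scale_comp, cexpi_opp_mul, c3scale_1. }
  assert (Hrx : rx a b = c3scale (exp (v a b)) e1).
  { unfold e1. now rewrite c3scale_comp, Hexp, c3scale_1. }
  assert (Hry : ry a b = c3scale (exp (v a b)) e2).
  { unfold e2. now rewrite c3scale_comp, Hexp, c3scale_1. }
  unfold orthogonal3.
  rewrite Hr, Hrx, Hry, !herm_scale2, det3_scale, h00, h11, h22, h01, h02, h12, hdet,
    Cconj_cexpi, Cconj_RtoC, Ropp_involutive, cexpi_opp_mul, <- exp_sqr.
  repeat split; ring.
Qed.

Lemma E_neq0 a b : RtoC (E a b) <> 0.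
Proof. intro H. apply RtoC_inj in H. exact (exp_neq_0 _ H). Qed.

Lemma frame_nondegenerate a b : Omega (a, b) ->
  herm (r a b) (r a b) <> 0 /\ herm (rx a b) (rx a b) <> 0 /\
  herm (ry a b) (ry a b) <> 0 /\ det3 (r a b) (rx a b) (ry a b) <> 0.
Proof.
  intro H. destruct (frame_gram a b H) as (_ & -> & -> & -> & ->).
  repeat split; try apply E_neq0.
  - intro K. apply RtoC_inj in K. lra.
  - apply Cmult_neq_0; [apply E_neq0 | apply cexpi_neq0].
Qed.

Lemma herm_parseval_frame a b u w : Omega (a, b) ->
  herm u w = (herm u (r a b) * Cconj (herm w (r a b))
              + (herm u (rx a b) * Cconj (herm w (rx a b))
                 + herm u (ry a b) * Cconj (herm w (ry a b))) / E a b)%C.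
Proof.
  intro H. destruct (frame_nondegenerate a b H) as (N0 & N1 & N2 & Nd).
  destruct (frame_gram a b H) as (Ho & G0 & G1 & G2 & _).
  rewrite (herm_parseval_orthogonal3 _ _ _ u w Ho N0 N1 N2 Nd), G0, G1, G2.
  field. apply E_neq0.
Qed.

Lemma herm_rxx_r a b : Omega (a, b) -> herm (rxx a b) (r a b) = (- E a b)%C.
Proof.
  intro H. destruct (frame_gram a b H) as (_ & _ & G1 & _).
  rewrite <- G1. apply Cplus_eq0_opp.
  apply (herm_vdx_const Omega rx r 0); auto.
  intros s t Hst. apply herm_eq0_sym, (frame_gram s t Hst).
Qed.

Lemma herm_rxy_r a b : Omega (a, b) -> herm (rxy a b) (r a b) = 0.
Proof.
  intro H. destruct (frame_gram a b H) as ((_ & _ & O12) & _).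
  rewrite <- Copp_0, <- O12. apply Cplus_eq0_opp.
  apply (herm_vdy_const Omega rx r 0); auto.
  intros s t Hst. apply herm_eq0_sym, (frame_gram s t Hst).
Qed.

Lemma herm_ryy_r a b : Omega (a, b) -> herm (ryy a b) (r a b) = (- E a b)%C.
Proof.
  intro H. destruct (frame_gram a b H) as (_ & _ & _ & G2 & _).
  rewrite <- G2. apply Cplus_eq0_opp.
  apply (herm_vdy_const Omega ry r 0); auto.
  intros s t Hst. apply herm_eq0_sym, (frame_gram s t Hst).
Qed.

Lemma herm_rxy_ry a b : Omega (a, b) ->
  herm (rxy a b) (ry a b) = (E a b * dx v a b, U a b).
Proof.
  intro H. destruct (frame_gram a b H) as (_ & _ & _ & G2 & _).
  pose proof (f_def a b H) as Hf.
  rewrite (herm_vdx_scale_exp Omega v ry a b v_smooth ry_smooth H), ryx_rxy, G2 in Hf by exact H.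
  replace (herm (rxy a b) (ry a b)) with
    (E a b * (/ E a b * (herm (rxy a b) (ry a b) - dx v a b * E a b)) + E a b * dx v a b)%C
    by (field; apply E_neq0).
  rewrite <- RtoC_inv, <- Hf by apply exp_neq_0. C_eq.
Qed.

Lemma herm_rxy_rx a b : Omega (a, b) ->
  herm (rxy a b) (rx a b) = (E a b * dy v a b, V a b).
Proof.
  intro H. destruct (frame_gram a b H) as (_ & _ & G1 & _).
  pose proof (g_def a b H) as Hg.
  rewrite (herm_vdy_scale_exp Omega v rx a b v_smooth rx_smooth H), G1 in Hg.
  replace (herm (rxy a b) (rx a b)) with
    (E a b * (/ E a b * (herm (rxy a b) (rx a b) - dy v a b * E a b)) + E a b * dy v a b)%C
    by (field; apply E_neq0).
  rewrite <- RtoC_inv, <- Hg by apply exp_neq_0. C_eq.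
Qed.

Lemma herm_rxx_ry a b : Omega (a, b) ->
  herm (rxx a b) (ry a b) = (- (E a b * dy v a b), V a b).
Proof.
  intro H.
  assert (K : (herm (rxx a b) (ry a b) + herm (rx a b) (vdx ry a b))%C = 0).
  { apply (herm_vdx_const Omega rx ry 0); auto. intros s t Hst. apply (frame_gram s t Hst). }
  rewrite ryx_rxy, (herm_conj_sym (rx a b)), herm_rxy_rx in K by exact H.
  rewrite (Cplus_eq0_opp _ _ K). C_eq.
Qed.

Lemma herm_ryy_rx a b : Omega (a, b) ->
  herm (ryy a b) (rx a b) = (- (E a b * dx v a b), U a b).
Proof.
  intro H.
  assert (K : (herm (ryy a b) (rx a b) + herm (ry a b) (rxy a b))%C = 0).
  { apply (herm_vdy_const Omega ry rx 0); auto.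
    intros s t Hst. apply herm_eq0_sym, (frame_gram s t Hst). }
  rewrite (herm_conj_sym (ry a b)), herm_rxy_ry in K by exact H.
  rewrite (Cplus_eq0_opp _ _ K). C_eq.
Qed.

(* Jacobi's formula for det(r, r_x, r_y) = e^{2v - i beta}: this is where the Lagrangian angle
   enters. *)
Lemma herm_rxx_rx_add_rxy_ry a b : Omega (a, b) ->
  (herm (rxx a b) (rx a b) + herm (rxy a b) (ry a b))%C =
  (E a b * (2 * dx v a b) - Ci * (E a b * dx beta a b))%C.
Proof.
  intro H.
  destruct (frame_gram a b H) as (Ho & G0 & G1 & G2 & Gd).
  destruct (frame_nondegenerate a b H) as (N0 & N1 & N2 & Nd).
  assert (Hder : (det3 (rx a b) (rx a b) (ry a b) + det3 (r a b) (rxx a b) (ry a b)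
                  + det3 (r a b) (rx a b) (rxy a b))%C =
    (RtoC (2 * dx v a b * E a b) * cexpi (- beta a b)
     + E a b * (Ci * RtoC (- dx beta a b) * cexpi (- beta a b)))%C).
  { rewrite <- (ryx_rxy a b H).
    apply (is_derive_C_unique (fun s => det3 (r s b) (rx s b) (ry s b)) a).
    - exact (is_derive_det3 _ _ _ _ _ _ _ (is_derive_C3_vdx _ _ a b r_smooth H)
        (is_derive_C3_vdx _ _ a b rx_smooth H) (is_derive_C3_vdx _ _ a b ry_smooth H)).
    - eapply is_derive_C_ext_loc.
      + apply (locally_line_x Omega
          (fun s t => (E s t * cexpi (- beta s t))%C = det3 (r s t) (rx s t) (ry s t)));
          [exact Omega_open | exact H |].
        intros s t Hst. symmetry. apply (frame_gram s t Hst).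
      + exact (is_derive_C_mult _ _ _ _ _
          (is_derive_C_RtoC _ _ _ (is_derive_exp2_x Omega v a b v_smooth H))
          (is_derive_C_cexpi _ _ _ (is_derive_opp _ _ _
             (is_derive_dx Omega beta a b beta_smooth H)))). }
  rewrite (det3_jacobi_orthogonal3 _ _ _ _ _ _ Ho N0 N1 N2 Nd), G0, G1, G2, Gd,
    (herm_eq0_sym _ _ (proj1 Ho)) in Hder.
  transitivity ((0 / 1 + herm (rxx a b) (rx a b) / E a b + herm (rxy a b) (ry a b) / E a b)
                * (E a b * cexpi (- beta a b)) / cexpi (- beta a b))%C.
  { field. split; [apply E_neq0 | apply cexpi_neq0]. }
  rewrite Hder, !RtoC_mult, RtoC_opp. field. apply cexpi_neq0.
Qed.

Lemma herm_rxy_rx_add_ryy_ry a b : Omega (a, b) ->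
  (herm (rxy a b) (rx a b) + herm (ryy a b) (ry a b))%C =
  (E a b * (2 * dy v a b) - Ci * (E a b * dy beta a b))%C.
Proof.
  intro H.
  destruct (frame_gram a b H) as (Ho & G0 & G1 & G2 & Gd).
  destruct (frame_nondegenerate a b H) as (N0 & N1 & N2 & Nd).
  assert (Hder : (det3 (ry a b) (rx a b) (ry a b) + det3 (r a b) (rxy a b) (ry a b)
                  + det3 (r a b) (rx a b) (ryy a b))%C =
    (RtoC (2 * dy v a b * E a b) * cexpi (- beta a b)
     + E a b * (Ci * RtoC (- dy beta a b) * cexpi (- beta a b)))%C).
  { apply (is_derive_C_unique (fun t => det3 (r a t) (rx a t) (ry a t)) b).
    - exact (is_derive_det3 _ _ _ _ _ _ _ (is_derive_C3_vdy _ _ a b r_smooth H)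
        (is_derive_C3_vdy _ _ a b rx_smooth H) (is_derive_C3_vdy _ _ a b ry_smooth H)).
    - eapply is_derive_C_ext_loc.
      + apply (locally_line_y Omega
          (fun s t => (E s t * cexpi (- beta s t))%C = det3 (r s t) (rx s t) (ry s t)));
          [exact Omega_open | exact H |].
        intros s t Hst. symmetry. apply (frame_gram s t Hst).
      + exact (is_derive_C_mult _ _ _ _ _
          (is_derive_C_RtoC _ _ _ (is_derive_exp2_y Omega v a b v_smooth H))
          (is_derive_C_cexpi _ _ _ (is_derive_opp _ _ _
             (is_derive_dy Omega beta a b beta_smooth H)))). }
  rewrite (det3_jacobi_orthogonal3 _ _ _ _ _ _ Ho N0 N1 N2 Nd), G0, G1, G2, Gd,
    (herm_eq0_sym _ _ (proj1 (proj2 Ho))) in Hder.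
  transitivity ((0 / 1 + herm (rxy a b) (rx a b) / E a b + herm (ryy a b) (ry a b) / E a b)
                * (E a b * cexpi (- beta a b)) / cexpi (- beta a b))%C.
  { field. split; [apply E_neq0 | apply cexpi_neq0]. }
  rewrite Hder, !RtoC_mult, RtoC_opp. field. apply cexpi_neq0.
Qed.

Lemma herm_rxx_rx a b : Omega (a, b) ->
  herm (rxx a b) (rx a b) = (E a b * dx v a b, - (E a b * dx beta a b + U a b)).
Proof.
  intro H.
  replace (herm (rxx a b) (rx a b)) with
    (herm (rxx a b) (rx a b) + herm (rxy a b) (ry a b) - herm (rxy a b) (ry a b))%C by ring.
  rewrite herm_rxx_rx_add_rxy_ry, herm_rxy_ry by exact H.
  C_eq.
Qed.

Lemma herm_ryy_ry a b : Omega (a, b) ->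
  herm (ryy a b) (ry a b) = (E a b * dy v a b, - (E a b * dy beta a b + V a b)).
Proof.
  intro H.
  replace (herm (ryy a b) (ry a b)) with
    (herm (rxy a b) (rx a b) + herm (ryy a b) (ry a b) - herm (rxy a b) (rx a b))%C by ring.
  rewrite herm_rxy_rx_add_ryy_ry, herm_rxy_rx by exact H.
  C_eq.
Qed.

Lemma Im_herm_rxx_rxy a b : Omega (a, b) ->
  Im (herm (rxx a b) (rxy a b)) = - (E a b * dy v a b * dx beta a b).
Proof.
  intro H.
  rewrite (herm_parseval_frame a b), herm_rxx_r, herm_rxy_r, herm_rxx_rx, herm_rxy_rx, herm_rxx_ry,
    herm_rxy_ry by exact H.
  unfold Cdiv. rewrite <- RtoC_inv by apply exp_neq_0.
  unfold Im, Cplus, Cmult, Copp, Cminus, Cconj, RtoC, Ci. cbn. field. apply exp_neq_0.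
Qed.

Lemma herm_rxx_ryy_sub_rxy_rxy a b : Omega (a, b) ->
  (herm (rxx a b) (ryy a b) - herm (rxy a b) (rxy a b))%C =
  (E a b ^ 2 - 2 * E a b * (dx v a b ^ 2 + dy v a b ^ 2)
   - (dx beta a b * U a b + dy beta a b * V a b) - 2 * (U a b ^ 2 + V a b ^ 2) / E a b,
   E a b * (dx v a b * dx beta a b - dy v a b * dy beta a b)).
Proof.
  intro H.
  rewrite (herm_parseval_frame a b (rxx a b)), (herm_parseval_frame a b (rxy a b)),
    herm_rxx_r, herm_rxy_r, herm_ryy_r, herm_rxx_rx, herm_rxy_rx, herm_ryy_rx,
    herm_rxx_ry, herm_rxy_ry, herm_ryy_ry by exact H.
  unfold Cdiv. rewrite <- RtoC_inv by apply exp_neq_0.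
  apply injective_projections; unfold Cplus, Cmult, Copp, Cminus, Cconj, RtoC, Ci; cbn;
    field; apply exp_neq_0.
Qed.

(* Differentiate <r_xx, w> in y and <r_xy, w> in x: the third-order terms agree since
   r_xxy = r_xyx. *)
Lemma integrability_rx a b : Omega (a, b) ->
  dy U a b + dx V a b =
  - (E a b * (2 * dy v a b * dx beta a b + dy (dx beta) a b))
  - 2 * Im (herm (rxx a b) (rxy a b)).
Proof.
  intro H.
  destruct (herm_identity_dy Omega rxx rx _ _ a b Omega_open rxx_smooth rx_smooth
    herm_rxx_rx H) as [_ Hy].
  destruct (herm_identity_dx Omega rxy rx _ _ a b Omega_open rxy_smooth rx_smooth
    herm_rxy_rx H) as [_ Hx].
  rewrite rxyx_rxxy in Hx by exact H.
  assert (HU : is_derive (fun t => U a t) b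
    (- Im (herm (vdy rxx a b) (rx a b) + herm (rxx a b) (rxy a b))
     - E a b * (2 * dy v a b * dx beta a b + dy (dx beta) a b))).
  { eapply is_derive_ext_eq; [apply (is_derive_minus _ _ _ _ _ (is_derive_opp _ _ _ Hy)
      (is_derive_exp2_mul_y Omega v (dx beta) a b v_smooth
         (smooth_on_dpart _ _ (true :: nil) beta_smooth) H)) | | reflexivity].
    intro t. unfold minus, plus, opp; simpl. ring. }
  rewrite (dy_of U a b _ HU), (dx_of V a b _ Hx), (herm_conj_sym (rxy a b)).
  unfold Im, Cplus, Cconj; simpl. ring.
Qed.

Lemma integrability_ry a b : Omega (a, b) ->
  - (E a b * (2 * dy v a b * dy v a b + dy (dy v) a b))
  - E a b * (2 * dx v a b * dx v a b + dx (dx v) a b) =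
    Re (herm (rxx a b) (ryy a b) - herm (rxy a b) (rxy a b)) /\
  dy V a b - dx U a b = Im (herm (rxx a b) (ryy a b) - herm (rxy a b) (rxy a b)).
Proof.
  intro H.
  destruct (herm_identity_dy Omega rxx ry _ _ a b Omega_open rxx_smooth ry_smooth
    herm_rxx_ry H) as [Ry Iy].
  destruct (herm_identity_dx Omega rxy ry _ _ a b Omega_open rxy_smooth ry_smooth
    herm_rxy_ry H) as [Rx Ix].
  rewrite rxyx_rxxy, ryx_rxy in Rx, Ix by exact H.
  pose proof (is_derive_unique_value _ _ _ _ Ry (is_derive_opp _ _ _
    (is_derive_exp2_mul_y Omega v (dy v) a b v_smooth
       (smooth_on_dpart _ _ (false :: nil) v_smooth) H))) as Ky.
  pose proof (is_derive_unique_value _ _ _ _ Rx (is_derive_exp2_mul_x Omega v (dx v) a b v_smooth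
       (smooth_on_dpart _ _ (true :: nil) v_smooth) H)) as Kx.
  split.
  - transitivity (Re (herm (vdy rxx a b) (ry a b) + herm (rxx a b) (ryy a b))
                  - Re (herm (vdy rxx a b) (ry a b) + herm (rxy a b) (rxy a b))).
    + rewrite Ky, Kx. unfold opp; simpl. ring.
    + unfold Re, Cplus, Cminus, Copp; simpl. ring.
  - rewrite (dy_of V a b _ Iy), (dx_of U a b _ Ix).
    unfold Im, Cplus, Cminus, Copp; simpl. ring.
Qed.

End LagrangianFrame.

Theorem lemma1
  (Omega : R * R -> Prop) (r : R -> R -> C3) (v beta f g : R -> R -> R) :
  domain2 Omega ->
  smooth_on_C3 Omega r ->
  smooth_on Omega v ->
  smooth_on Omega beta ->
  (* r maps into S^5 *)
  (forall x y, Omega (x, y) -> c3norm (r x y) = 1) ->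
  (* <r,r_x> = <r,r_y> = <r_x,r_y> = 0 *)
  (forall x y, Omega (x, y) -> herm (r x y) (vdx r x y) = RtoC 0) ->
  (forall x y, Omega (x, y) -> herm (r x y) (vdy r x y) = RtoC 0) ->
  (forall x y, Omega (x, y) -> herm (vdx r x y) (vdy r x y) = RtoC 0) ->
  (* |r_x| = |r_y| = e^v *)
  (forall x y, Omega (x, y) -> c3norm (vdx r x y) = exp (v x y)) ->
  (forall x y, Omega (x, y) -> c3norm (vdy r x y) = exp (v x y)) ->
  (* rows e^{i beta} r, e^{-v} r_x, e^{-v} r_y form a matrix in SU(3) *)
  (forall x y, Omega (x, y) ->
     in_SU3 (c3scale (cexpi (beta x y)) (r x y))
            (c3scale (RtoC (exp (- v x y))) (vdx r x y))
            (c3scale (RtoC (exp (- v x y))) (vdy r x y))) ->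
  (* i f = < d_x (e^{-v} r_y), e^{-v} r_y >,  i g = < d_y (e^{-v} r_x), e^{-v} r_x > *)
  (forall x y, Omega (x, y) ->
     Cmult Ci (RtoC (f x y)) =
     herm (vdx (fun a b => c3scale (RtoC (exp (- v a b))) (vdy r a b)) x y)
          (c3scale (RtoC (exp (- v x y))) (vdy r x y))) ->
  (forall x y, Omega (x, y) ->
     Cmult Ci (RtoC (g x y)) =
     herm (vdy (fun a b => c3scale (RtoC (exp (- v a b))) (vdx r a b)) x y)
          (c3scale (RtoC (exp (- v x y))) (vdx r x y))) ->
  let U := fun x y => f x y * exp (2 * v x y) in
  let V := fun x y => g x y * exp (2 * v x y) in
  forall x y, Omega (x, y) ->
    dy U x y + dx V x y + exp (2 * v x y) * dy (dx beta) x y = 0 /\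
    dy V x y + dy v x y * exp (2 * v x y) * dy beta x y
      = dx U x y + dx v x y * exp (2 * v x y) * dx beta x y /\
    dx (dx v) x y + dy (dy v) x y + exp (2 * v x y)
      - 2 * (U x y ^ 2 + V x y ^ 2) * exp (- 4 * v x y)
      - (dx beta x y * U x y + dy beta x y * V x y) * exp (- 2 * v x y) = 0.
Proof.
  intros (_ & HO & _) Hr Hv Hb _ _ _ _ _ _ HSU Hf Hg U V x y H. subst U V.
  pose proof (integrability_rx _ _ _ _ _ _ HO Hr Hv Hb HSU Hf Hg x y H) as Crx.
  rewrite (Im_herm_rxx_rxy _ _ _ _ _ _ HO Hr Hv Hb HSU Hf Hg x y H) in Crx.
  destruct (integrability_ry _ _ _ _ _ _ HO Hr Hv HSU Hf Hg x y H) as [Cre Cim].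
  rewrite (herm_rxx_ryy_sub_rxy_rxy _ _ _ _ _ _ HO Hr Hv Hb HSU Hf Hg x y H) in Cre, Cim.
  simpl in Cre, Cim. cbv beta in *.
  assert (E4 : exp (- 4 * v x y) = / (exp (2 * v x y) * exp (2 * v x y)))
    by (rewrite <- exp_plus, <- exp_Ropp; f_equal; ring).
  assert (E2 : exp (- 2 * v x y) = / exp (2 * v x y))
    by (rewrite <- exp_Ropp; f_equal; ring).
  rewrite E4, E2. set (e := exp (2 * v x y)) in *.
  assert (He : e <> 0) by apply exp_neq_0.
  split; [lra | split; [lra |]].
  apply (Rmult_eq_reg_l e); [|exact He].
  apply eq_sym, Rminus_diag_eq in Cre. rewrite Rmult_0_r, <- Cre. field. exact He.
Qed.
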